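(* Let $R$ be a commutative Noetherian ring. Let $\mathcal{A}$ be an essentially small $R$-linear abelian category with the following properties: - every object of $\mathcal{A}$ is Noetherian; - $\mathcal{A}$ is $\operatorname{Hom}$-finite over $R$; - every decreasing sequence of subobjects of an object of $\mathcal{A}$ has an intersection in $\mathcal{A}$. If $\mathcal{A}$ has a weak generator $G$, then every object of $\mathcal{A}$ is Artinian. In particular, $\mathcal{A}$ is a length category.
   Context: An object is Artinian (resp. Noetherian) if every descending (resp. ascending) chain of its subobjects becomes stationary. An abelian category is a length category if every object is both Artinian and Noetherian. $\mathcal{A}$ is $\operatorname{Hom}$-finite over $R$ if it is $R$-linear and $\operatorname{Hom}(A,B)$ is a finite length $R$-module for all $A,B\in\mathcal{A}$. An object $G$ is a weak generator if $\operatorname{Hom}(G,E)=0$ implies $E\cong0$. *)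

From HB Require Import structures.
From mathcomp Require Import all_boot all_order all_algebra.
Set Implicit Arguments. Unset Strict Implicit. Unset Printing Implicit Defensive.
Import GRing.Theory.
Local Open Scope ring_scope.

Definition is_ideal (R : comPzRingType) (I : R -> Prop) : Prop :=
  I 0 /\ forall (a x y : R), I x -> I y -> I (a * x + y).

Definition noetherian_ring (R : comPzRingType) : Prop :=
  forall I : nat -> R -> Prop,
    (forall n, is_ideal (I n)) ->
    (forall n x, I n x -> I n.+1 x) ->
    exists N, forall n, (N <= n)%N -> forall x, I n x -> I N x.

Definition is_submod (R : comPzRingType) (M : lmodType R) (P : M -> Prop) : Prop :=
  P 0 /\ forall (a : R) (x y : M), P x -> P y -> P (a *: x + y).

Definition finite_length (R : comPzRingType) (M : lmodType R) : Prop :=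
  exists (n : nat) (c : nat -> M -> Prop),
    (forall x, c 0%N x <-> x = 0) /\
    (forall x, c n x) /\
    (forall i, (i < n)%N ->
       [/\ is_submod (c i), is_submod (c i.+1),
           (forall x, c i x -> c i.+1 x),
           (exists x, c i.+1 x /\ ~ c i x) &
           (forall N : M -> Prop, is_submod N ->
              (forall x, c i x -> N x) -> (forall x, N x -> c i.+1 x) ->
              (forall x, N x -> c i x) \/ (forall x, c i.+1 x -> N x))]).

Record lincat (R : comPzRingType) := LinCat {
  Obj : Type;
  Hom : Obj -> Obj -> lmodType R;
  comp : forall A B C : Obj, Hom B C -> Hom A B -> Hom A C;
  idm : forall A : Obj, Hom A A;
  compA : forall A B C D (h : Hom C D) (g : Hom B C) (f : Hom A B),
      comp h (comp g f) = comp (comp h g) f;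
  comp1m : forall A B (f : Hom A B), comp (idm B) f = f;
  compm1 : forall A B (f : Hom A B), comp f (idm A) = f;
  comp_linr : forall A B C (g : Hom B C) (a : R) (f f' : Hom A B),
      comp g (a *: f + f') = a *: comp g f + comp g f';
  comp_linl : forall A B C (f : Hom A B) (a : R) (g g' : Hom B C),
      comp (a *: g + g') f = a *: comp g f + comp g' f
}.

Arguments Obj {R}.
Arguments Hom {_} _ _ _.
Arguments comp {_ _ _ _ _}.
Arguments idm {_ _ _}.

Section Abelian.
Variables (R : comPzRingType) (C : lincat R).
Local Notation Hom := (Hom C).
Local Notation Obj := (Obj C).

Definition mono (A B : Obj) (m : Hom A B) : Prop :=
  forall X (u v : Hom X A), comp m u = comp m v -> u = v.
Definition epi (A B : Obj) (e : Hom A B) : Prop :=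
  forall X (u v : Hom B X), comp u e = comp v e -> u = v.

Definition zero_obj (Z : Obj) : Prop :=
  forall X : Obj, (forall f g : Hom Z X, f = g) /\ (forall f g : Hom X Z, f = g).

Definition is_kernel (A B K : Obj) (f : Hom A B) (k : Hom K A) : Prop :=
  comp f k = 0 /\
  forall X (x : Hom X A), comp f x = 0 -> exists! u : Hom X K, comp k u = x.

Definition is_cokernel (A B Q : Obj) (f : Hom A B) (q : Hom B Q) : Prop :=
  comp q f = 0 /\
  forall X (x : Hom B X), comp x f = 0 -> exists! u : Hom Q X, comp u q = x.

Definition abelian : Prop :=
  (exists Z, zero_obj Z) /\
  (forall A B : Obj, exists (P : Obj) (i1 : Hom A P) (i2 : Hom B P)
       (p1 : Hom P A) (p2 : Hom P B),
     [/\ comp p1 i1 = idm, comp p2 i2 = idm, comp p1 i2 = 0, comp p2 i1 = 0 &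
         comp i1 p1 + comp i2 p2 = idm]) /\
  (forall A B (f : Hom A B), exists K (k : Hom K A), is_kernel f k) /\
  (forall A B (f : Hom A B), exists Q (q : Hom B Q), is_cokernel f q) /\
  (forall S A (m : Hom S A), mono m -> exists B (f : Hom A B), is_kernel f m) /\
  (forall A Q (e : Hom A Q), epi e -> exists B (f : Hom B A), is_cokernel f e).

Definition subobj_le (A S T : Obj) (m : Hom S A) (n : Hom T A) : Prop :=
  exists u : Hom S T, comp n u = m.

Definition artinian_obj (A : Obj) : Prop :=
  forall (S : nat -> Obj) (m : forall k, Hom (S k) A),
    (forall k, mono (m k)) ->
    (forall k, subobj_le (m k.+1) (m k)) ->
    exists N, forall k, (N <= k)%N -> subobj_le (m k) (m k.+1).

Definition noetherian_obj (A : Obj) : Prop :=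
  forall (S : nat -> Obj) (m : forall k, Hom (S k) A),
    (forall k, mono (m k)) ->
    (forall k, subobj_le (m k) (m k.+1)) ->
    exists N, forall k, (N <= k)%N -> subobj_le (m k.+1) (m k).

Definition hom_finite : Prop :=
  forall A B : Obj, finite_length (Hom A B).

Definition decreasing_intersections : Prop :=
  forall (A : Obj) (S : nat -> Obj) (m : forall k, Hom (S k) A),
    (forall k, mono (m k)) ->
    (forall k, subobj_le (m k.+1) (m k)) ->
    exists (I : Obj) (i : Hom I A),
      [/\ mono i, (forall k, subobj_le i (m k)) &
          (forall X (j : Hom X A), mono j ->
             (forall k, subobj_le j (m k)) -> subobj_le j i)].

Definition weak_generator (G : Obj) : Prop :=
  forall E : Obj, (forall f : Hom G E, f = 0) -> zero_obj E.

Definition length_category : Prop :=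
  forall A : Obj, artinian_obj A /\ noetherian_obj A.

End Abelian.

(* Given a descending chain of subobjects S_k of A with intersection I, look
   at the images of the S_k in A/I.  The maps G -> A/I that factor through
   the image of S_k form a descending chain of submodules of the finite
   length R-module Hom(G, A/I), which therefore stabilises at some N.  A map
   factoring through every S_k/I factors through their intersection, which
   is 0; hence Hom(G, S_N/I) = 0, so S_N/I = 0 because G is a weak
   generator, i.e. S_k = I for all k >= N. *)

From Pilot Require Import Defs.
From HB Require Import structures.
From mathcomp Require Import all_boot all_order all_algebra.
From Stdlib Require Import Classical ClassicalDescription.
Set Implicit Arguments. Unset Strict Implicit. Unset Printing Implicit Defensive.
Import GRing.Theory.

Lemma nonincreasing_stable (a : nat -> nat) : (forall k, a k.+1 <= a k) ->
  exists N, forall k, N <= k -> a k = a N.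
Proof.
move Ea0 : (a 0) => v; elim/ltn_ind: v a Ea0 => v IH a Ea0 a_dec.
have a_homo : {homo a : j k / j <= k >-> k <= j}.
  by apply: homo_leq => // y x z /[swap]; apply: leq_trans.
have [[k ak] | a_const] := classic (exists k, a k < a 0); last first.
  exists 0 => k _; apply/eqP; rewrite eqn_leq a_homo //= leqNgt.
  by apply/negP => ak; apply: a_const; exists k.
have [|j|N HN] := IH (a k) _ (fun j => a (k + j)) (congr1 a (addn0 k)) _.
- by rewrite -Ea0.
- by rewrite addnS.
exists (k + N) => j kNj; have kj : k <= j := leq_trans (leq_addr _ _) kNj.
by rewrite -(subnKC kj) HN // leq_subRL.
Qed.

Section FiniteLength.
Local Open Scope ring_scope.
Variables (R : comPzRingType) (M : lmodType R).
Implicit Types (V W : M -> Prop) (c : nat -> M -> Prop).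

Lemma submodD V x y : is_submod V -> V x -> V y -> V (x + y).
Proof. by case=> _ V_lin Vx Vy; have := V_lin 1 x y Vx Vy; rewrite scale1r. Qed.

Lemma submodZ V a x : is_submod V -> V x -> V (a *: x).
Proof. by case=> V0 V_lin Vx; have := V_lin a x 0 Vx V0; rewrite addr0. Qed.

Lemma submodB V x y : is_submod V -> V x -> V y -> V (x - y).
Proof. by move=> V_sub Vx Vy; rewrite -scaleN1r; apply: submodD => //; apply: submodZ. Qed.

Definition composition_series n c : Prop :=
  (forall x, c 0%N x <-> x = 0) /\
  (forall x, c n x) /\
  (forall i, (i < n)%N ->
     [/\ is_submod (c i), is_submod (c i.+1),
         (forall x, c i x -> c i.+1 x),
         (exists x, c i.+1 x /\ ~ c i x) &
         (forall N : M -> Prop, is_submod N ->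
            (forall x, c i x -> N x) -> (forall x, N x -> c i.+1 x) ->
            (forall x, N x -> c i x) \/ (forall x, c i.+1 x -> N x))]).

Definition meets_factor c i W : Prop := exists x, [/\ W x, c i.+1 x & ~ c i x].

Definition indicator (P : Prop) : nat :=
  if excluded_middle_informative P then 1%N else 0%N.

Lemma indicator_mono (P Q : Prop) : (P -> Q) -> (indicator P <= indicator Q)%N.
Proof.
rewrite /indicator => PQ.
case: excluded_middle_informative => [p | //]; have Qh := PQ p.
by case: excluded_middle_informative => // /(_ Qh).
Qed.

Lemma meets_factor_mono c i V W :
  (forall x, V x -> W x) -> meets_factor c i V -> meets_factor c i W.
Proof. by move=> VW [x [Vx cx ncx]]; exists x; split => //; apply: VW. Qed.

(* For a submodule [W] this is its length, read off the filtration [W :&: c i]. *)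
Definition factor_count n c W : nat := \sum_(i < n) indicator (meets_factor c i W).

Lemma factor_count_mono n c V W :
  (forall x, V x -> W x) -> (factor_count n c V <= factor_count n c W)%N.
Proof.
by move=> VW; apply: leq_sum => i _; apply/indicator_mono/meets_factor_mono.
Qed.

Section CompositionSeries.
Variables (n : nat) (c : nat -> M -> Prop).
Hypothesis cs : composition_series n c.

Lemma composition_factor_span i x0 x : (i < n)%N ->
  c i.+1 x0 -> ~ c i x0 -> c i.+1 x -> exists z r, c i z /\ x = z + r *: x0.
Proof.
case: cs => _ [_ /(_ i) cs_i] /cs_i [ci_sub ci1_sub ci_ci1 _ ci_max] cx0 ncx0 cx.
pose N y := exists z r, c i z /\ y = z + r *: x0.
have N_sub : is_submod N.
  split; first by exists 0, 0; rewrite scale0r addr0; case: ci_sub.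
  move=> a _ _ [z1 [r1 [cz1 ->]]] [z2 [r2 [cz2 ->]]].
  exists (a *: z1 + z2), (a * r1 + r2); split; first by case: ci_sub => _; apply.
  by rewrite scalerDr scalerDl scalerA addrACA.
case: (ci_max N N_sub) => [z cz | _ [z [r [cz ->]]] | N_ci | ci1_N].
- by exists z, 0; rewrite scale0r addr0.
- exact: submodD (ci_ci1 _ cz) (submodZ r ci1_sub cx0).
- by case: ncx0; apply: N_ci; exists 0, 1; rewrite add0r scale1r; case: ci_sub.
- exact: ci1_N.
Qed.

Lemma sub_of_meets_factor V W : is_submod V -> is_submod W ->
  (forall x, V x -> W x) ->
  (forall i, (i < n)%N -> meets_factor c i W -> meets_factor c i V) ->
  forall x, W x -> V x.
Proof.
move=> V_sub W_sub VW WV.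
suff: forall i, (i <= n)%N -> forall x, W x -> c i x -> V x.
  by case: cs => _ [cn _] /(_ n (leqnn n)) WcV x Wx; apply: WcV.
elim=> [|i IH] i_le x Wx cx.
  by case: cs => /(_ x) [/(_ cx) -> _] _; case: V_sub.
have [i_meets | i_misses] := classic (meets_factor c i W).
  have [x0 [Vx0 c1x0 ncx0]] := WV i i_le i_meets.
  have [z [r [cz x_eq]]] := composition_factor_span i_le c1x0 ncx0 cx.
  have Wz : W z.
    by have := submodB W_sub Wx (submodZ r W_sub (VW _ Vx0)); rewrite x_eq addrK.
  rewrite x_eq; apply: submodD => //; last exact: submodZ.
  exact: IH (ltnW i_le) _ Wz cz.
apply: (IH (ltnW i_le) x Wx).
by apply: NNPP => ncx; apply: i_misses; exists x.
Qed.

Lemma sub_of_factor_count V W : is_submod V -> is_submod W ->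
  (forall x, V x -> W x) -> (factor_count n c W <= factor_count n c V)%N ->
  forall x, W x -> V x.
Proof.
move=> V_sub W_sub VW count_le; apply: sub_of_meets_factor => // i i_lt Wi.
apply: NNPP => Vi; move: count_le; apply/negP; rewrite -ltnNge.
rewrite /factor_count (bigD1 (Ordinal i_lt)) //= [X in (_ < X)%N](bigD1 (Ordinal i_lt)) //=.
rewrite /indicator; do 2!case: excluded_middle_informative => //= _.
by rewrite add0n ltnS; apply: leq_sum => j _; apply/indicator_mono/meets_factor_mono.
Qed.

End CompositionSeries.

Lemma finite_length_dcc (U : nat -> M -> Prop) : finite_length M ->
  (forall k, is_submod (U k)) -> (forall k x, U k.+1 x -> U k x) ->
  exists N, forall k, (N <= k)%N -> forall x, U N x -> U k x.
Proof.
case=> n [c cs] U_sub U_dec.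
have U_anti : {homo U : j k / (j <= k)%N >-> forall x, k x -> j x}.
  by apply: homo_leq => // P Q T QP TQ x /TQ /QP.
have [N N_stable] := @nonincreasing_stable (fun k => factor_count n c (U k))
  (fun k => factor_count_mono n c (U_dec k)).
exists N => k Nk; apply: (@sub_of_factor_count n c cs) => //; first exact: U_anti.
by rewrite N_stable.
Qed.

End FiniteLength.

Section LinearCategory.
Local Open Scope ring_scope.
Variables (R : comPzRingType) (C : lincat R).
Local Notation Hom := (Defs.Hom C).
Local Notation Obj := (Defs.Obj C).
Local Notation comp := Defs.comp.
Local Notation compA := Defs.compA.

Lemma comp0r A B D (g : Hom B D) : comp g (0 : Hom A B) = 0.
Proof.
have := comp_linr (A := A) g 1 0 0; rewrite !scale1r !addr0.
by rewrite -{1}(addr0 (comp g 0)) => /addrI.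
Qed.

Lemma comp0l A B D (f : Hom A B) : comp (0 : Hom B D) f = 0.
Proof.
have := comp_linl (C := D) f 1 0 0; rewrite !scale1r !addr0.
by rewrite -{1}(addr0 (comp 0 f)) => /addrI.
Qed.

Lemma compBl A B D (f : Hom A B) (g g' : Hom B D) :
  comp (g - g') f = comp g f - comp g' f.
Proof. by have := comp_linl f (-1) g' g; rewrite !scaleN1r addrC => ->; rewrite addrC. Qed.

Lemma subobj_le_refl A S (m : Hom S A) : subobj_le m m.
Proof. by exists idm; apply: compm1. Qed.

Lemma subobj_le_trans A S T U (m : Hom S A) (n : Hom T A) (p : Hom U A) :
  subobj_le m n -> subobj_le n p -> subobj_le m p.
Proof. by case=> u nu [v pv]; exists (comp v u); rewrite compA pv. Qed.

Lemma kernel_factor A B K (f : Hom A B) (k : Hom K A) : is_kernel f k ->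
  forall X (x : Hom X A), comp f x = 0 -> exists u, comp k u = x.
Proof. by case=> _ k_univ X x /k_univ [u [ku _]]; exists u. Qed.

Lemma cokernel_factor A B Q (f : Hom A B) (q : Hom B Q) : is_cokernel f q ->
  forall X (x : Hom B X), comp x f = 0 -> exists u, comp u q = x.
Proof. by case=> _ q_univ X x /q_univ [u [uq _]]; exists u. Qed.

Lemma kernel_mono A B K (f : Hom A B) (k : Hom K A) : is_kernel f k -> mono k.
Proof.
case=> fk k_univ X u v kuv.
have fku : comp f (comp k u) = 0 by rewrite compA fk comp0l.
by have [w [_ w_uniq]] := k_univ X _ fku; rewrite -(w_uniq u) // (w_uniq v).
Qed.

Lemma cokernel_epi A B Q (f : Hom A B) (q : Hom B Q) : is_cokernel f q -> epi q.
Proof.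
case=> qf q_univ X u v uqv.
have uqf : comp (comp u q) f = 0 by rewrite -compA qf comp0r.
by have [w [_ w_uniq]] := q_univ X _ uqf; rewrite -(w_uniq u) // (w_uniq v).
Qed.

Lemma epi0 A B (e : Hom A B) X (u : Hom B X) : epi e -> comp u e = 0 -> u = 0.
Proof. by move=> e_epi ue; apply: e_epi; rewrite ue comp0l. Qed.

Lemma epiP A B (e : Hom A B) :
  (forall X (u : Hom B X), comp u e = 0 -> u = 0) -> epi e.
Proof.
move=> e_cancel X u v uev; apply/eqP; rewrite -subr_eq0; apply/eqP/e_cancel.
by rewrite compBl uev subrr.
Qed.

(* [in_image h f] says that the image of [f] is contained in that of [h],
   phrased through the maps killing [h]. *)
Definition in_image B S T (h : Hom S B) (f : Hom T B) : Prop :=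
  forall X (x : Hom B X), comp x h = 0 -> comp x f = 0.

Lemma in_image_trans B S T U (h : Hom S B) (g : Hom T B) (f : Hom U B) :
  in_image h g -> in_image g f -> in_image h f.
Proof. by move=> hg gf X x /hg /gf. Qed.

Lemma in_image_compr B S T U (h : Hom S B) (f : Hom T B) (z : Hom U T) :
  in_image h f -> in_image h (comp f z).
Proof. by move=> hf X x /hf xf; rewrite compA xf comp0l. Qed.

Lemma in_image_compl B D S T (g : Hom B D) (h : Hom S B) (f : Hom T B) :
  in_image h f -> in_image (comp g h) (comp g f).
Proof. by move=> hf X x; rewrite !compA => /hf. Qed.

Lemma in_image_subobj_le A S T (m : Hom S A) (n : Hom T A) :
  subobj_le m n -> in_image n m.
Proof. by case=> u <-; apply: in_image_compr. Qed.

Lemma in_image_submod B S T (h : Hom S B) : is_submod (@in_image B S T h).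
Proof.
split=> [X x _ | a f g hf hg X x xh]; first exact: comp0r.
by rewrite comp_linr (hf _ _ xh) (hg _ _ xh) scaler0 addr0.
Qed.

Lemma in_image_cokernel_kernel B S Q E (h : Hom S B) (c : Hom B Q) (e : Hom E B) :
  is_cokernel h c -> is_kernel c e -> in_image h e.
Proof.
move=> cok_c [ce _] X x /(cokernel_factor cok_c) [w <-].
by rewrite -compA ce comp0r.
Qed.

Lemma in_image_cokernel A I P S T (i : Hom I A) (q : Hom A P) (m : Hom S A)
    (y : Hom T A) :
  is_cokernel i q -> subobj_le i m -> in_image (comp q m) (comp q y) ->
  in_image m y.
Proof.
move=> cok_q [v mv] qm_qy X x xm.
have [w wq] : exists w, comp w q = x.
  by apply: (cokernel_factor cok_q); rewrite -mv compA xm comp0l.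
by rewrite -wq -compA; apply: qm_qy; rewrite compA wq.
Qed.

End LinearCategory.

Section AbelianCategory.
Local Open Scope ring_scope.
Variables (R : comPzRingType) (C : lincat R).
Hypothesis abC : abelian C.
Local Notation Hom := (Defs.Hom C).
Local Notation Obj := (Defs.Obj C).
Local Notation comp := Defs.comp.
Local Notation compA := Defs.compA.

Lemma kernel_exists A B (f : Hom A B) : exists K (k : Hom K A), is_kernel f k.
Proof. by case: abC => _ [_ [ker _]]; apply: ker. Qed.

Lemma cokernel_exists A B (f : Hom A B) : exists Q (q : Hom B Q), is_cokernel f q.
Proof. by case: abC => _ [_ [_ [coker _]]]; apply: coker. Qed.

Lemma mono_is_kernel S A (m : Hom S A) : mono m -> exists B (f : Hom A B), is_kernel f m.
Proof. by case: abC => _ [_ [_ [_ [mono_ker _]]]]; apply: mono_ker. Qed.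

Lemma epi_is_cokernel A Q (e : Hom A Q) : epi e -> exists B (f : Hom B A), is_cokernel f e.
Proof. by case: abC => _ [_ [_ [_ [_ epi_coker]]]]; apply: epi_coker. Qed.

Lemma mono_cokernel_factor I A P (i : Hom I A) (q : Hom A P) :
  mono i -> is_cokernel i q ->
  forall X (x : Hom X A), comp q x = 0 -> exists u, comp i u = x.
Proof.
move=> i_mono cok_q X x qx.
have [B [f ker_i]] := mono_is_kernel i_mono.
have [w wq] := cokernel_factor cok_q (proj1 ker_i).
by apply: (kernel_factor ker_i); rewrite -wq -compA qx comp0r.
Qed.

(* Pullbacks preserve epimorphisms; the pullback [K] is the kernel of
   [q p1 - f p2 : A (+) T -> P]. *)
Lemma pullback_epi A T P (q : Hom A P) (f : Hom T P) : epi q ->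
  exists K (y : Hom K A) (z : Hom K T), comp q y = comp f z /\ epi z.
Proof.
move=> q_epi.
have [_ [/(_ A T) [B [i1 [i2 [p1 [p2 [p1i1 p2i2 _ p2i1 _]]]]]] _]] := abC.
pose phi := comp q p1 - comp f p2.
have phi_i1 : comp phi i1 = q.
  by rewrite compBl -!compA p1i1 p2i1 comp0r subr0 compm1.
have phi_epi : epi phi.
  by move=> X u v uv; apply: q_epi; rewrite -phi_i1 !compA uv.
have [K [k ker_k]] := kernel_exists phi.
exists K, (comp p1 k), (comp p2 k); split.
  by apply/eqP; rewrite -subr_eq0 !compA -compBl (proj1 ker_k).
apply: epiP => X w wz.
have [D [g cok_phi]] := epi_is_cokernel phi_epi.
have [t kt] := kernel_factor ker_k (proj1 cok_phi).
have [v vphi] : exists v, comp v phi = comp w p2.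
  by apply: (cokernel_factor cok_phi); rewrite -kt -compA (compA p2) compA wz comp0l.
have v0 : v = 0 by apply: epi0 q_epi _; rewrite -phi_i1 compA vphi -compA p2i1 comp0r.
by rewrite -(compm1 w) -p2i2 compA -vphi v0 !comp0l.
Qed.

Lemma image_subobj_le A T Q S E (y : Hom T A) (c : Hom A Q) (n : Hom E A)
    (m : Hom S A) :
  is_cokernel y c -> is_kernel c n -> mono m -> in_image m y -> subobj_le n m.
Proof.
move=> cok_c ker_n m_mono my.
have [D [d ker_m]] := mono_is_kernel m_mono.
have [w wc] := cokernel_factor cok_c (my _ _ (proj1 ker_m)).
by apply: (kernel_factor ker_m); rewrite -wc -compA (proj1 ker_n) comp0r.
Qed.

(* A map into [A/I] whose image lies in every [S_k/I] pulls back to a map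
   into [A] with image in every [S_k], hence in their intersection [I]. *)
Lemma in_all_images_zero A I P T (S : nat -> Obj) (m : forall k, Hom (S k) A)
    (i : Hom I A) (q : Hom A P) (f : Hom T P) :
  (forall k, mono (m k)) -> (forall k, subobj_le i (m k)) ->
  (forall X (j : Hom X A), mono j -> (forall k, subobj_le j (m k)) -> subobj_le j i) ->
  is_cokernel i q -> (forall k, in_image (comp q (m k)) f) -> f = 0.
Proof.
move=> m_mono i_lb i_glb cok_q f_in.
have [K [y [z [qy_fz z_epi]]]] := pullback_epi f (cokernel_epi cok_q).
have [Q [c cok_c]] := cokernel_exists y.
have [N [n ker_n]] := kernel_exists c.
have [v iv] : subobj_le n i.
  apply: i_glb (kernel_mono ker_n) _ => k.
  apply: image_subobj_le cok_c ker_n (m_mono k) _.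
  apply: in_image_cokernel cok_q (i_lb k) _.
  by rewrite qy_fz; apply/in_image_compr/f_in.
have [u nu] := kernel_factor ker_n (proj1 cok_c).
apply: epi0 z_epi _; rewrite -qy_fz -nu -iv !compA (proj1 cok_q).
by rewrite !comp0l.
Qed.

Lemma artinian_of_weak_generator (G : Obj) :
  hom_finite C -> decreasing_intersections C -> weak_generator G ->
  forall A : Obj, artinian_obj A.
Proof.
move=> hfin dec_int G_gen A S m m_mono m_dec.
have [I [i [i_mono i_lb i_glb]]] := dec_int A S m m_mono m_dec.
have [P [q cok_q]] := cokernel_exists i.
have m_chain j k : (j <= k)%N -> subobj_le (m k) (m j).
  move=> /subnK <-; elim: (k - j)%N => [|d IH]; first exact: subobj_le_refl.
  exact: subobj_le_trans (m_dec _) IH.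
pose U k (f : Hom G P) := in_image (comp q (m k)) f.
have U_anti j k f : (j <= k)%N -> U k f -> U j f.
  by move=> /m_chain /in_image_subobj_le /(in_image_compl (g := q)); apply: in_image_trans.
have [N U_stable] := finite_length_dcc (U := U) (hfin G P)
  (fun k => in_image_submod G (comp q (m k))) (fun k => U_anti k k.+1 ^~ (leqnSn k)).
have [Q [c cok_c]] := cokernel_exists (comp q (m N)).
have [E [e ker_e]] := kernel_exists c.
have E0 : zero_obj E.
  apply: G_gen => g; apply: (kernel_mono ker_e); rewrite comp0r.
  apply: in_all_images_zero m_mono i_lb i_glb cok_q _ => k.
  have eg_in : U N (comp e g).
    exact/in_image_compr/(in_image_cokernel_kernel cok_c ker_e).
  by have [/U_stable|/ltnW/U_anti] := leqP N k; apply; exact: eg_in.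
have qmN0 : comp q (m N) = 0.
  have [t et] := kernel_factor ker_e (proj1 cok_c).
  by rewrite -et (proj1 (E0 P) e 0) comp0l.
exists N => k Nk.
have [x ix] : exists x, comp i x = m k.
  apply: mono_cokernel_factor i_mono cok_q _ _ _.
  by have [u <-] := m_chain N k Nk; rewrite compA qmN0 comp0l.
by apply: subobj_le_trans (i_lb k.+1); exists x.
Qed.

End AbelianCategory.

Theorem mainTheorem3 (R : comPzRingType) (C : lincat R) (G : Obj C) :
  noetherian_ring R ->
  abelian C ->
  (forall A : Obj C, noetherian_obj A) ->
  hom_finite C ->
  decreasing_intersections C ->
  weak_generator G ->
  (forall A : Obj C, artinian_obj A) /\ length_category C.
Proof.
move=> _ abC noetherian hfin dec_int G_gen.
have artinian := artinian_of_weak_generator abC hfin dec_int G_gen.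
by split=> // A; split.
Qed.
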